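(* For any positive integers $f,l$ and any choice of integers $(M_C)_C$ for which the hypercube Hamiltonian $H=\sum_C\bigl(\sum_{i\in C}S_i-M_C\bigr)^2$ has at least one zero energy assignment, any two distinct zero energy assignments differ in at least $2^f$ variables; consequently every global minimum of $H$ is a $(2^f-1)$-minimum.
   Context: Fix positive integers $f,l$ and let $N=l^f$. The variables $S_i\in\{-1,+1\}$ are indexed by vectors $i=(x_1,\dots,x_f)$ with $x_a\in\{1,\dots,l\}$. A column $C$ is specified by an index $b\in\{1,\dots,f\}$ and integers $y_a\in\{1,\dots,l\}$ for all $a\neq b$; a variable $(x_1,\dots,x_f)$ lies in $C$ iff $x_a=y_a$ for all $a\neq b$. Given an integer $M_C$ for each column, $H(S)=\sum_C\bigl(\sum_{i\in C}S_i-M_C\bigr)^2$. A zero energy assignment is an $S$ with $\sum_{i\in C}S_i=M_C$ for every column $C$. A global minimum is an assignment minimizing $H$. For an integer $k\geq1$, an assignment $A$ is a $k$-minimum of $H$ if every assignment differing from $A$ in at least one and at most $k$ variables has a strictly larger value of $H$ than $A$. *)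

From HB Require Import structures.
From mathcomp Require Import all_boot all_order all_algebra.
Set Implicit Arguments. Unset Strict Implicit. Unset Printing Implicit Defensive.
Import Order.TTheory GRing.Theory Num.Theory.
Local Open Scope ring_scope.

(* Variables are indexed by vectors (x_1,...,x_f) with x_a in {1..l},
   encoded as finite functions 'I_f -> 'I_l (0-based). *)
Definition vindex (f l : nat) := {ffun 'I_f -> 'I_l}.

(* A column: a direction b and values y_a for all a <> b. *)
Definition column (f l : nat) :=
  {b : 'I_f & {ffun {a : 'I_f | a != b} -> 'I_l}}.

Definition in_col (f l : nat) (C : column f l) (x : vindex f l) : bool :=
  [forall a : {a : 'I_f | a != tag C}, x (val a) == tagged C a].

(* An assignment S_i in {-1,+1}, encoded as a boolean (true <-> +1). *)
Definition assignment (f l : nat) := {ffun vindex f l -> bool}.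

Definition spin (b : bool) : int := if b then 1 else -1.

Definition colsum (f l : nat) (S : assignment f l) (C : column f l) : int :=
  \sum_(x : vindex f l | in_col C x) spin (S x).

Definition H (f l : nat) (M : column f l -> int) (S : assignment f l) : int :=
  \sum_(C : column f l) (colsum S C - M C) ^+ 2.

Definition zero_energy (f l : nat) (M : column f l -> int) (S : assignment f l) : Prop :=
  forall C : column f l, colsum S C = M C.

Definition global_min (f l : nat) (M : column f l -> int) (A : assignment f l) : Prop :=
  forall T : assignment f l, H M A <= H M T.

Definition hdist (f l : nat) (S T : assignment f l) : nat :=
  #|[set x : vindex f l | S x != T x]|.

Definition k_minimum (f l : nat) (M : column f l -> int) (k : nat) (A : assignment f l) : Prop :=
  forall T : assignment f l, (0 < hdist A T <= k)%N -> H M A < H M T.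

From HB Require Import structures.
From mathcomp Require Import all_boot all_order all_algebra.

Set Implicit Arguments.
Unset Strict Implicit.
Unset Printing Implicit Defensive.

Import Order.TTheory GRing.Theory Num.Theory.
Local Open Scope ring_scope.

(* If two zero energy assignments S and T differ at y, then the column sums of
   S and T agree on every column through y, so S and T also differ at some
   other point of that column.  Thus the set D of points where they differ
   meets every axis-parallel line through one of its points in a second point.
   Such a set has at least 2^f points: the points of D agreeing with y outside
   a set F of directions number at least 2^|F|, since for b in F they contain
   two disjoint such families for F minus b, one through y and one through a
   second point of D on the b-line through y.  A global minimum has energy 0
   when a zero energy assignment exists, and every assignment of energy 0 is
   then at Hamming distance 0 or at least 2^f from it. *)

Section LineClosedSets.
Variables (I T : finType) (P : {set {ffun I -> T}}).

Definition slice (F : {set I}) (x : {ffun I -> T}) : {set {ffun I -> T}} :=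
  [set y in P | [forall a, (a \notin F) ==> (y a == x a)]].

Lemma slice_id (F : {set I}) (x : {ffun I -> T}) : x \in P -> x \in slice F x.
Proof. by move=> xP; rewrite inE xP; apply/forallP => a; rewrite eqxx implybT. Qed.

Lemma slice_sub (F G : {set I}) (x y : {ffun I -> T}) :
  G \subset F -> y \in slice F x -> slice G y \subset slice F x.
Proof.
move=> GF; rewrite inE => /andP[_ /forallP yFx].
apply/subsetP => z; rewrite !inE => /andP[-> /forallP zGy] /=.
apply/forallP => a; apply/implyP => aF.
have aG : a \notin G by apply: contra aF; apply: (subsetP GF).
by rewrite (eqP (implyP (zGy a) aG)) (implyP (yFx a) aF).
Qed.

Lemma slice_setT (x : {ffun I -> T}) : slice [set: I] x = P.
Proof.
by apply/setP => y; rewrite inE andb_idr // => _; apply/forallP => a; rewrite inE.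
Qed.

Definition line_closed : Prop := forall (y : {ffun I -> T}) (b : I), y \in P ->
  exists2 z, z \in P & z b != y b /\ (forall a, a != b -> z a = y a).

Hypothesis P_line_closed : line_closed.

Lemma card_slice (F : {set I}) (x y : {ffun I -> T}) :
  y \in slice F x -> (2 ^ #|F| <= #|slice F x|)%N.
Proof.
move cardF: #|F| => n; elim: n F x y cardF => [|n IHn] F x y cardF yFx.
  by rewrite expn0 card_gt0; apply/set0Pn; exists y.
have [b Fb] : exists b, b \in F by apply/card_gt0P; rewrite cardF.
have cardFb : #|F :\ b| = n by move: cardF; rewrite (cardsD1 b) Fb => -[].
have yP : y \in P by move: yFx; rewrite inE => /andP[].
have [z zP [zb_neq z_off_b]] := P_line_closed b yP.
have zFx : z \in slice F x.
  move: yFx; rewrite !inE zP => /andP[_ /forallP yFx]; apply/forallP => a.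
  apply/implyP => aF; rewrite z_off_b; first exact: (implyP (yFx a) aF).
  by apply: contraNneq aF => ->.
have disj : slice (F :\ b) y :&: slice (F :\ b) z = set0.
  apply/setP => w; rewrite !inE; apply/negP.
  case/andP => /andP[_ /forallP wy] /andP[_ /forallP wz].
  have bFb : b \notin F :\ b by rewrite !inE eqxx.
  by rewrite -(eqP (implyP (wz b) bFb)) (eqP (implyP (wy b) bFb)) eqxx in zb_neq.
have cardU : #|slice (F :\ b) y :|: slice (F :\ b) z|
              = (#|slice (F :\ b) y| + #|slice (F :\ b) z|)%N.
  by rewrite -cardsUI disj cards0 addn0.
have sub : slice (F :\ b) y :|: slice (F :\ b) z \subset slice F x.
  by rewrite subUset (slice_sub (subD1set F b) yFx) (slice_sub (subD1set F b) zFx).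
rewrite expnS mul2n -addnn; apply: leq_trans (subset_leq_card sub).
by rewrite cardU; apply: leq_add; apply: IHn cardFb _; exact: slice_id.
Qed.

Lemma line_closed_card : P != set0 -> (2 ^ #|I| <= #|P|)%N.
Proof.
case/set0Pn => x xP; rewrite -cardsT -(slice_setT x).
by apply: (card_slice (y := x)); rewrite slice_id.
Qed.

End LineClosedSets.

Lemma sumr_eq0_other_nonzero (V : zmodType) (X : finType) (A : pred X)
    (G : X -> V) (y : X) :
  \sum_(x | A x) G x = 0 -> A y -> G y != 0 ->
  exists2 z, A z & (z != y) && (G z != 0).
Proof.
move=> sum0 Ay Gy; case: (pickP [pred z | [&& A z, z != y & G z != 0]]).
  by move=> z /and3P[Az zy Gz]; exists z => //; rewrite zy.
move=> none; move: sum0; rewrite (bigD1 y) //= big1 ?addr0 => [/eqP|z /andP[Az zy]].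
  by rewrite (negbTE Gy).
by apply/eqP; move: (none z); rewrite /= Az zy /= => /negbFE.
Qed.

Lemma spin_inj : injective spin.
Proof. by case; case. Qed.

Definition line_col (f l : nat) (b : 'I_f) (y : vindex f l) : column f l :=
  existT _ b [ffun a : {a : 'I_f | a != b} => y (val a)].

Lemma in_line_colP (f l : nat) (b : 'I_f) (y z : vindex f l) :
  reflect (forall a, a != b -> z a = y a) (in_col (line_col b y) z).
Proof.
apply: (iffP forallP) => /= [zy a ab | zy a].
  by move/eqP: (zy (exist _ a ab)); rewrite ffunE.
by rewrite ffunE zy ?(valP a).
Qed.

Section ZeroEnergy.
Variables (f l : nat) (M : column f l -> int).

Lemma zero_energy_diff_line_closed (S T : assignment f l) :
  zero_energy M S -> zero_energy M T -> line_closed [set x | S x != T x].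
Proof.
move=> zS zT y b; rewrite inE => STy.
pose C := line_col b y.
have sum0 : \sum_(x | in_col C x) (spin (S x) - spin (T x)) = 0.
  by rewrite sumrB -/(colsum S C) -/(colsum T C) zS zT subrr.
have yC : in_col C y by apply/in_line_colP.
have STy' : spin (S y) - spin (T y) != 0 by rewrite subr_eq0 (inj_eq spin_inj).
have [z /in_line_colP z_off_b /andP[zy STz]] := sumr_eq0_other_nonzero sum0 yC STy'.
exists z; first by rewrite inE -(inj_eq spin_inj) -subr_eq0.
split=> //; apply: contra zy => /eqP zby; apply/eqP/ffunP => a.
by case: (eqVneq a b) => [-> //|]; apply: z_off_b.
Qed.

Lemma zero_energy_hdist (S T : assignment f l) :
  zero_energy M S -> zero_energy M T -> S != T -> (2 ^ f <= hdist S T)%N.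
Proof.
move=> zS zT ST; rewrite -{1}(card_ord f).
apply: line_closed_card; first exact: zero_energy_diff_line_closed.
apply/set0Pn; have [y STy] : exists y, S y != T y.
  apply/existsP; apply: contraR ST => /existsPn STeq.
  by apply/eqP/ffunP => y; apply/eqP/negPn.
by exists y; rewrite inE.
Qed.
End ZeroEnergy.

Section GlobalMinimum.
Variables (f l : nat) (M : column f l -> int).

Lemma H_ge0 (S : assignment f l) : 0 <= H M S.
Proof. by apply: sumr_ge0 => C _; apply: sqr_ge0. Qed.

Lemma H_eq0P (S : assignment f l) : reflect (zero_energy M S) (H M S == 0).
Proof.
apply: (iffP eqP) => [H0 C | zS]; last by apply: big1 => C _; rewrite zS subrr expr0n.
have /eqP := psumr_eq0P (fun C _ => sqr_ge0 (colsum S C - M C)) H0 (i := C) isT.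
by rewrite sqrf_eq0 subr_eq0 => /eqP.
Qed.

Lemma hdist_eq0 (S T : assignment f l) : (hdist S T == 0%N) = (S == T).
Proof.
rewrite /hdist cards_eq0; apply/eqP/eqP => [ST0 | -> ]; last first.
  by apply/setP => x; rewrite !inE eqxx.
apply/ffunP => x; apply/eqP.
by move/setP/(_ x): ST0; rewrite !inE => /negbFE.
Qed.

Lemma global_min_k_minimum (A : assignment f l) :
  (exists S : assignment f l, zero_energy M S) -> global_min M A ->
  k_minimum M (2 ^ f - 1) A.
Proof.
move=> [S /H_eq0P/eqP HS0] minA T /andP[dist_gt0 dist_le].
have HA0 : H M A == 0 by rewrite eq_le H_ge0 andbT -HS0 minA.
rewrite (eqP HA0) lt_def H_ge0 andbT; apply/negP => /H_eq0P zT.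
have zA : zero_energy M A by apply/H_eq0P.
have AT : A != T by rewrite -hdist_eq0 -lt0n.
have := leq_trans (zero_energy_hdist zA zT AT) dist_le.
by rewrite subn1 leqNgt ltn_predL expn_gt0.
Qed.
End GlobalMinimum.

Theorem mainTheorem4 (f l : nat) (hf : (0 < f)%N) (hl : (0 < l)%N)
    (M : column f l -> int)
    (hz : exists S : assignment f l, zero_energy M S) :
  (forall S T : assignment f l, zero_energy M S -> zero_energy M T -> S != T ->
     (2 ^ f <= hdist S T)%N) /\
  (forall A : assignment f l, global_min M A -> k_minimum M (2 ^ f - 1) A).
Proof.
split; first exact: zero_energy_hdist.
by move=> A; apply: global_min_k_minimum.
Qed.
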